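(* Let $G=K\rtimes_\phi H$ be a finite Frobenius group with kernel $K$ and complement $H$, and suppose $K$ is abelian. Then $\mathrm{Aut}(G)\cong K\rtimes N_{\mathrm{Aut}(K)}(\phi(H))$, which is a subgroup of the holomorph $\mathrm{Hol}(K)=K\rtimes\mathrm{Aut}(K)$ (with $\mathrm{Aut}(K)$ acting naturally on $K$).
   Context: A finite group $G=K\rtimes_\phi H$ with $K,H$ nontrivial is a Frobenius group with kernel $K$ and complement $H$ if for every $h\in H$, $h\neq1$, the automorphism $\phi(h)$ fixes no nonidentity element of $K$. $N_{\mathrm{Aut}(K)}(\phi(H))$ is the normalizer of $\phi(H)$ in $\mathrm{Aut}(K)$. *)

From HB Require Import structures.
From mathcomp Require Import all_boot all_fingroup all_solvable.
Set Implicit Arguments. Unset Strict Implicit. Unset Printing Implicit Defensive.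

From HB Require Import structures.
From mathcomp Require Import all_boot all_fingroup all_solvable.
Set Implicit Arguments. Unset Strict Implicit. Unset Printing Implicit Defensive.
Local Open Scope group_scope.

(* Since H acts faithfully on K, G embeds in the holomorph K ⋊ Aut K as
   K ⋊ P with P = φ(H).  There T = K ⋊ N_{Aut K}(P) normalises K ⋊ P, and
   only trivially centralises it: an element s1 k * s2 a centralising K forces
   a = 1 (K is abelian), and then k is fixed by P, so k = 1.  Conversely K is a
   normal Hall, hence characteristic, subgroup of K ⋊ P, so by Schur-Zassenhaus
   every automorphism becomes, after an inner automorphism from K, one that
   also stabilises P; such an automorphism is conjugation by its restriction
   a ∈ Aut K, and a normalises P.  Thus conjugation maps T onto Aut(K ⋊ P). *)

Lemma isog_Aut (gT rT : finGroupType) (G : {group gT}) (H : {group rT}) :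
  G \isog H -> Aut G \isog Aut H.
Proof. by case/isogP=> f injf <-; rewrite isog_sym (injm_Aut injf). Qed.

Lemma isog_Aut_conj_aut (gT : finGroupType) (G T : {group gT}) :
    T \subset 'N(G) -> T :&: 'C(G) = 1 -> Aut G \subset conj_aut G @* T ->
  Aut G \isog T.
Proof.
move=> nGT tiTcG sAutT; rewrite isog_sym; apply/isogP.
exists (restrm nGT (conj_aut G)); first by rewrite ker_restrm ker_conj_aut tiTcG.
by apply/eqP; rewrite eqEsubset restrmEsub // Aut_conj_aut.
Qed.

Lemma coprime_sdprod_char_l (gT : finGroupType) (G K H : {group gT}) :
  K ><| H = G -> coprime #|K| #|H| -> K \char G.
Proof.
move=> defG coKH; have [nsKG _ _ _ _] := sdprod_context defG.
have hallK : Hall G K by rewrite -(coprime_sdprod_Hall_l defG).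
by rewrite -(normal_Hall_pcore (Hall_pi hallK) nsKG) pcore_char.
Qed.

Lemma eq_Aut_conj (gT : finGroupType) (K : {group gT}) (a p q : {perm gT}) :
    a \in Aut K -> p \in Aut K -> q \in Aut K ->
    {in K, forall y, q (a y) = a (p y)} ->
  q = p ^ a.
Proof.
move=> Aa Ap Aq qaE; apply: (eq_Aut Aq); first by rewrite groupJ.
move=> z Kz; have Ky : a^-1 z \in K by rewrite Aut_closed ?groupV.
by rewrite -(permKV a z) qaE // conjgE !permM permK.
Qed.

Section Holomorph.

Variables (gT : finGroupType) (K : {group gT}) (P : {group {perm gT}}).
Hypotheses (abK : abelian K) (sPAut : P \subset Aut K).
Hypotheses (coKP : coprime #|K| #|P|) (regP : 'C_(K | [Aut K])(P) = 1).

Local Notation to := [Aut K]%gact.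
Local Notation s1 := (sdpair1 to).
Local Notation s2 := (sdpair2 to).
Local Notation K1 := (s1 @* K).
Local Notation P1 := (s2 @* P).
Local Notation G1 := (K1 <*> P1).
Local Notation N1 := (s2 @* 'N_(Aut K)(P)).
Local Notation T := (K1 <*> N1).

Lemma sdpair1J x a : x \in K -> a \in Aut K -> s1 x ^ s2 a = s1 (a x).
Proof. by move=> Kx Aa; rewrite -sdpair_act. Qed.

Lemma sdpair1JM k a x :
  k \in K -> a \in Aut K -> x \in K -> s1 x ^ (s1 k * s2 a) = s1 (a x).
Proof.
move=> Kk Aa Kx; rewrite conjgM -morphJ // -sdpair1J ?memJ_norm ?(subsetP (normG K)) //.
by rewrite /conjg (centsP abK x Kx k Kk) mulKg.
Qed.

Let nK1P1 : P1 \subset 'N(K1).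
Proof. exact: subset_trans (morphimS _ sPAut) (im_sdpair_norm to). Qed.

Let coK1P1 : coprime #|K1| #|P1|.
Proof. by rewrite !card_injm ?injm_sdpair1 ?injm_sdpair2. Qed.

Lemma sdprod_holo : K1 ><| P1 = G1.
Proof.
apply: sdprodEY nK1P1 _.
by apply/trivgP; rewrite -(im_sdpair_TI to) setIS ?morphimS.
Qed.

Lemma char_holo : K1 \char G1.
Proof. exact: coprime_sdprod_char_l sdprod_holo coK1P1. Qed.

Lemma norm_holo : T \subset 'N(G1).
Proof.
rewrite join_subG (subset_trans (joing_subl _ _) (normG _)) /=.
rewrite normsY ?(subset_trans _ (im_sdpair_norm to)) ?morphimS ?subsetIl //.
by rewrite morphim_norms ?subsetIr.
Qed.

Let sdpair1_inj : {in K &, injective s1}.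
Proof. exact: injmP (injm_sdpair1 to). Qed.

Let sdpair1_holo x : x \in K -> s1 x \in G1.
Proof. by move=> Kx; rewrite mem_gen // inE mem_morphim. Qed.

Let sdpair2_holo p : p \in P -> s2 p \in G1.
Proof. by move=> Pp; rewrite mem_gen // inE mem_morphim ?orbT ?(subsetP sPAut). Qed.

Lemma cent_holo : T :&: 'C(G1) = 1.
Proof.
have holoE : T = K1 * N1.
  by apply: norm_joinEr; rewrite (subset_trans _ (im_sdpair_norm to)) ?morphimS ?subsetIl.
apply/eqP; rewrite eqEsubset sub1G andbT holoE; apply/subsetP=> t /setIP[].
move=> /mulsgP[_ _ /morphimP[k _ Kk ->] /morphimP[a _ /setIP[Aa _] ->] ->] cG1t.
have fixG1 y : y \in G1 -> y ^ (s1 k * s2 a) = y.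
  by move=> G1y; apply/conjg_fixP/commgP; exact: commute_sym (centP cG1t y G1y).
have a1 : a = 1.
  apply: (eq_Aut Aa (group1 _)) => x Kx; rewrite perm1.
  apply: sdpair1_inj; rewrite ?Aut_closed //.
  by rewrite -[LHS](sdpair1JM Kk Aa Kx) fixG1 ?sdpair1_holo.
suff: k \in 'C_(K | to)(P) by rewrite regP a1 => /set1P->; rewrite !morph1 mulg1.
rewrite inE Kk gacentE // inE Kk; apply/afixP=> p Pp /=.
have Ap := subsetP sPAut p Pp; apply: sdpair1_inj; rewrite ?Aut_closed //.
rewrite a1 morph1 mulg1 in cG1t; rewrite -[LHS](sdpair1J Kk Ap).
by apply/conjg_fixP/commgP; exact: (centP cG1t _ (sdpair2_holo Pp)).
Qed.

Lemma Aut_holo_restr beta :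
    beta \in Aut G1 -> {in K1, forall y, beta y \in K1} ->
  exists2 a, a \in Aut K & {in K, forall x, beta (s1 x) = s1 (a x)}.
Proof.
move=> Abeta betaK1.
have nK1beta : beta \in 'N(K1 | 'P).
  by rewrite !inE; apply/subsetP=> y K1y; rewrite inE /= betaK1.
have : restr_perm K1 beta \in Aut K1 by apply: Aut_restr_perm Abeta; apply: joing_subl.
rewrite -(im_Aut_isom (injm_sdpair1 to) (subxx K)) => /morphimP[a _ Aa def_a].
by exists a => // x Kx; rewrite -(restr_permE nK1beta) ?mem_morphim // def_a /= Aut_isomE.
Qed.

Lemma Aut_holo_sdpair2 beta a p q :
    beta \in Aut G1 -> a \in Aut K -> {in K, forall x, beta (s1 x) = s1 (a x)} ->
    p \in P -> q \in Aut K -> beta (s2 p) = s2 q ->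
  q = p ^ a.
Proof.
move=> Abeta Aa betaE Pp Aq def_q; have Ap := subsetP sPAut p Pp.
apply: (eq_Aut_conj Aa Ap Aq) => y Ky.
have Kay : a y \in K by exact: Aut_closed.
apply: sdpair1_inj; rewrite ?Aut_closed //.
rewrite -sdpair1J // -(betaE y Ky) -def_q -(autmE Abeta).
by rewrite -morphJ ?sdpair1_holo ?sdpair2_holo //= autmE sdpair1J ?betaE ?Aut_closed.
Qed.

Lemma Aut_holo_stab beta :
    beta \in Aut G1 -> {in K1, forall y, beta y \in K1} ->
    {in P1, forall y, beta y \in P1} ->
  beta \in conj_aut G1 @* N1.
Proof.
move=> Abeta betaK1 betaP1; have [a Aa betaE] := Aut_holo_restr Abeta betaK1.
have betaP p : p \in P -> p ^ a \in P /\ beta (s2 p) = s2 (p ^ a).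
  move=> Pp; have /morphimP[q Aq Pq def_q] := betaP1 _ (mem_morphim _ (subsetP sPAut p Pp) Pp).
  by rewrite -(Aut_holo_sdpair2 Abeta Aa betaE Pp Aq def_q).
have Na : a \in 'N_(Aut K)(P).
  rewrite in_setI Aa inE; apply/subsetP=> q; rewrite mem_conjg => /betaP[].
  by rewrite conjgKV.
have nG1a : s2 a \in 'N(G1) by rewrite (subsetP norm_holo) ?mem_gen ?inE ?mem_morphim ?orbT.
suff ->: beta = conj_aut G1 (s2 a) by rewrite mem_morphim ?mem_morphim.
apply: (eq_Aut Abeta); first by rewrite (subsetP (Aut_conj_aut G1 'N(G1))) ?mem_morphim.
rewrite -(sdprodW sdprod_holo) => _ /mulsgP[_ _ /morphimP[y _ Ky ->] /morphimP[p _ Pp ->] ->].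
have [_ betaEp] := betaP p Pp; have Ap := subsetP sPAut p Pp.
rewrite norm_conj_autE ?groupM ?sdpair1_holo ?sdpair2_holo // -(autmE Abeta).
rewrite morphM ?sdpair1_holo ?sdpair2_holo //= autmE betaE // betaEp conjMg.
by rewrite sdpair1J // morphJ.
Qed.

Lemma Aut_holo_sub_conj : Aut G1 \subset conj_aut G1 @* T.
Proof.
apply/subsetP=> alpha Aalpha.
have alphaK1 : autm Aalpha @* K1 = K1.
  by case/charP: char_holo => _ -> //; rewrite ?injm_autm ?im_autm.
have sP1G1 : P1 \subset G1 := joing_subr K1 P1.
have [x K1x defP1] : exists2 x, x \in K1 & autm Aalpha @* P1 :=: P1 :^ x.
  apply: SchurZassenhaus_trans_sol nK1P1 _ coK1P1 _.
  - exact/abelian_sol/morphim_abelian.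
  - by rewrite (sdprodW sdprod_holo) -(im_autm Aalpha) morphimS.
  - by rewrite card_injm ?injm_autm.
have G1x : x \in G1 by rewrite mem_gen ?inE ?K1x.
have nG1x : x \in 'N(G1) := subsetP (normG G1) x G1x.
pose beta := alpha * conj_aut G1 x^-1.
have Abeta : beta \in Aut G1.
  by rewrite groupM // (subsetP (Aut_conj_aut G1 'N(G1))) ?mem_morphim ?groupV.
have betaE y : y \in G1 -> beta y = alpha y ^ x^-1.
  by move=> G1y; rewrite permM conj_autE ?groupV ?Aut_closed.
have alphaE (A : {set _}) y : y \in A -> A \subset G1 -> alpha y \in autm Aalpha @* A.
  by move=> Ay sAG1; apply: (mem_morphim (autm_morphism Aalpha) (subsetP sAG1 y Ay) Ay).
have: beta \in conj_aut G1 @* N1.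
  apply: Aut_holo_stab Abeta _ _ => y Ay; rewrite betaE.
  - by rewrite groupJ ?groupV //; move: (alphaE _ _ Ay (joing_subl K1 P1)); rewrite alphaK1.
  - by rewrite mem_gen ?inE ?Ay.
  - by rewrite -mem_conjg -defP1 alphaE.
  - exact: subsetP sP1G1 y Ay.
have ->: alpha = beta * conj_aut G1 x.
  by rewrite -mulgA -morphM ?groupV // mulVg morph1 mulg1.
move/(subsetP (morphimS _ (joing_subr K1 N1))) => Tbeta.
by rewrite groupM // mem_morphim // mem_gen ?inE ?K1x.
Qed.

Theorem Aut_holo_isog : Aut G1 \isog T.
Proof. exact: isog_Aut_conj_aut norm_holo cent_holo Aut_holo_sub_conj. Qed.

End Holomorph.

Lemma gacent_conj_aut (gT : finGroupType) (K H : {group gT}) :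
  H \subset 'N(K) -> 'C_(K | [Aut K])(conj_aut K @* H) = 'C_K(H).
Proof.
move=> nKH; rewrite subgacentE ?Aut_conj_aut //; apply/setP=> x; rewrite !in_setI.
apply: andb_id2l => Kx; apply/afixP/centP=> [fix_x h Hh | cHx _ /morphimP[h nKh Hh ->]].
  apply/commgP/conjg_fixP; rewrite -(norm_conj_autE (subsetP nKH h Hh) Kx).
  exact: fix_x (mem_morphim _ (subsetP nKH h Hh) Hh).
by change (conj_aut K h x = x); rewrite norm_conj_autE //; apply/conjg_fixP/commgP/cHx.
Qed.

Lemma sdprod_isog_holo (gT : finGroupType) (G K H : {group gT}) :
    K ><| H = G -> 'C_H(K) = 1 ->
  G \isog sdpair1 [Aut K] @* K <*> sdpair2 [Aut K] @* (conj_aut K @* H).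
Proof.
move=> defG tiHcK; have [_ _ nKH _] := sdprodP defG.
have sHdom : H \subset conj_aut K @*^-1 Aut K by rewrite -sub_morphim_pre ?Aut_conj_aut.
pose fH := restrm sHdom (sdpair2 [Aut K] \o conj_aut K).
have fH_act : {in K & H, morph_act 'J 'J (sdpair1 [Aut K]) fH}.
  move=> x h Kx Hh; have nKh := subsetP nKH h Hh.
  rewrite /= -sdpair_act ?(subsetP (Aut_conj_aut K H)) ?mem_morphim //.
  by congr (sdpair1 _ _); change (x ^ h = conj_aut K h x); rewrite norm_conj_autE.
have imfH : fH @* H = sdpair2 [Aut K] @* (conj_aut K @* H).
  by rewrite restrmEsub // morphim_comp.
apply/isogP; exists (sdprodm defG fH_act).
  rewrite injm_sdprodm injm_sdpair1 imfH ker_restrm ker_comp /=.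
  rewrite (trivgP (injm_sdpair2 _)) -kerE ker_conj_aut tiHcK subxx /=.
  by apply/eqP/trivgP; rewrite -(im_sdpair_TI [Aut K]) setIS ?morphimS ?Aut_conj_aut.
rewrite im_sdprodm imfH /= norm_joinEr //.
exact: subset_trans (morphimS _ (Aut_conj_aut K H)) (im_sdpair_norm _).
Qed.

Lemma semiregular_cent_trivg (gT : finGroupType) (K H : {group gT}) :
  K :!=: 1 -> semiregular K H -> 'C_H(K) = 1.
Proof.
move=> ntK regKH; have [k /setD1P[ntk Kk]] : exists k, k \in K^#.
  by apply/set0Pn; rewrite setD_eq0 subG1.
apply/trivgP; rewrite -(semiregular_sym regKH (x := k)) ?inE ?ntk //.
by apply/subsetP=> y /setIP[Hy cKy]; rewrite inE Hy; apply/cent1P; exact: (centP cKy k Kk).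
Qed.

Theorem corollary3p4 (gT : finGroupType) (G K H : {group gT}) :
  K ><| H = G -> K :!=: 1 -> H :!=: 1 -> semiregular K H -> abelian K ->
  [Aut G]%G \isog
    (sdpair1 (aut_groupAction K) @* K)
      <*> (sdpair2 (aut_groupAction K) @* 'N_(Aut K)(conj_aut K @* H)).
Proof.
move=> defG ntK ntH regKH abK.
have frobG : [Frobenius G = K ><| H] by apply/Frobenius_semiregularP.
have [_ _ nKH _] := sdprodP defG.
apply: isog_trans (isog_Aut (sdprod_isog_holo defG (semiregular_cent_trivg ntK regKH))) _.
apply: Aut_holo_isog => //; first exact: Aut_conj_aut.
  by rewrite (coprime_dvdr (dvdn_morphim _ _)) ?(Frobenius_coprime frobG).
by rewrite gacent_conj_aut ?(Frobenius_trivg_cent frobG).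
Qed.
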